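(* Let $A$ be a quantifier-free formula of $\mathbf{L}$ (i.e. a formula of $\mathbf{L_1}$). If $A$ is a theorem of $\mathbf{L}$, then $\vdash_H A$. That is, $\mathbf{L}$ is a conservative extension of the Hilbert-type $\mathbf{L_1}$.
   Context: Formulas of $\mathbf{L_1}$: built from atomic formulas $\epsilon ab$ ($a,b$ name variables, possibly equal) with primitive connectives $\vee,\sim$; $\wedge,\supset,\equiv$ defined as usual. $\vdash_H A$: $A$ belongs to the smallest set containing all instances of classical propositional tautologies and all formulas $\epsilon ab\supset\epsilon aa$, $(\epsilon ab\wedge\epsilon bc)\supset\epsilon ac$, $(\epsilon ab\wedge\epsilon bb)\supset\epsilon ba$, closed under modus ponens. Leśniewski's elementary ontology $\mathbf{L}$: the first-order theory (in classical first-order predicate logic without equality) whose language has the name variables as individual variables and a single binary predicate $\epsilon$, with the axiom (universal closure of) $\epsilon ab\equiv\big(\exists x(\epsilon xa\wedge\epsilon xb)\wedge\forall x\forall y(\epsilon xa\wedge\epsilon ya\supset\epsilon xy)\big)$. Formulas of $\mathbf{L_1}$ are exactly the quantifier-free formulas of $\mathbf{L}$. *)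

From Stdlib Require Import Arith Bool.

Inductive form : Type :=
| Eps : nat -> nat -> form
| Or  : form -> form -> form
| Neg : form -> form
| All : nat -> form -> form.

Definition Imp (A B : form) : form := Or (Neg A) B.
Definition And (A B : form) : form := Neg (Or (Neg A) (Neg B)).
Definition Eqv (A B : form) : form := And (Imp A B) (Imp B A).
Definition Ex (x : nat) (A : form) : form := Neg (All x (Neg A)).

Fixpoint qf (A : form) : bool :=
  match A with
  | Eps _ _ => true
  | Or A B => qf A && qf B
  | Neg A => qf A
  | All _ _ => false
  end.

Inductive pform : Type :=
| PVar : nat -> pform
| POr  : pform -> pform -> pform
| PNeg : pform -> pform.

Fixpoint peval (v : nat -> bool) (P : pform) : bool :=
  match P with
  | PVar n => v n
  | POr P Q => peval v P || peval v Q
  | PNeg P => negb (peval v P)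
  end.

Definition tautology (P : pform) : Prop := forall v, peval v P = true.

Fixpoint pinst (s : nat -> form) (P : pform) : form :=
  match P with
  | PVar n => s n
  | POr P Q => Or (pinst s P) (pinst s Q)
  | PNeg P => Neg (pinst s P)
  end.

Definition taut_instance (ok : form -> Prop) (A : form) : Prop :=
  exists (P : pform) (s : nat -> form),
    tautology P /\ (forall n, ok (s n)) /\ pinst s P = A.

Inductive HProv : form -> Prop :=
| H_taut : forall A, taut_instance (fun B => qf B = true) A -> HProv A
| H_ax1 : forall a b, HProv (Imp (Eps a b) (Eps a a))
| H_ax2 : forall a b c, HProv (Imp (And (Eps a b) (Eps b c)) (Eps a c))
| H_ax3 : forall a b, HProv (Imp (And (Eps a b) (Eps b b)) (Eps b a))
| H_mp : forall A B, HProv (Imp A B) -> HProv A -> HProv B.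

Fixpoint free (x : nat) (A : form) : bool :=
  match A with
  | Eps a b => (a =? x) || (b =? x)
  | Or A B => free x A || free x B
  | Neg A => free x A
  | All z A => negb (z =? x) && free x A
  end.

Fixpoint subst (x y : nat) (A : form) : form :=
  match A with
  | Eps a b => Eps (if a =? x then y else a) (if b =? x then y else b)
  | Or A B => Or (subst x y A) (subst x y B)
  | Neg A => Neg (subst x y A)
  | All z A => if z =? x then All z A else All z (subst x y A)
  end.

Fixpoint freefor (y x : nat) (A : form) : bool :=
  match A with
  | Eps _ _ => true
  | Or A B => freefor y x A && freefor y x B
  | Neg A => freefor y x A
  | All z A =>
      if z =? x then true
      else (negb (z =? y) || negb (free x A)) && freefor y x A
  end.

(* The axiom of L (universal closure), with a = 0, b = 1, x = 2, y = 3: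
   forall a b, eps a b == (exists x (eps x a /\ eps x b) /\
                           forall x y (eps x a /\ eps y a -> eps x y)). *)
Definition L_axiom : form :=
  All 0 (All 1
    (Eqv (Eps 0 1)
         (And (Ex 2 (And (Eps 2 0) (Eps 2 1)))
              (All 2 (All 3 (Imp (And (Eps 2 0) (Eps 3 0)) (Eps 2 3))))))).

Inductive LProv : form -> Prop :=
| L_nonlog : LProv L_axiom
| L_taut : forall A, taut_instance (fun _ => True) A -> LProv A
| L_inst : forall x y A, freefor y x A = true ->
    LProv (Imp (All x A) (subst x y A))
| L_dist : forall x A B, free x A = false ->
    LProv (Imp (All x (Imp A B)) (Imp A (All x B)))
| L_mp : forall A B, LProv (Imp A B) -> LProv A -> LProv B
| L_gen : forall x A, LProv A -> LProv (All x A).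

From Stdlib Require Import Arith Bool List Classical ClassicalEpsilon Cantor.
Import ListNotations.

(* The proof is semantic and goes through boolean valuations w of the atoms
   eps a b that are H-closed: w a b -> w a a, transitivity, and
   w a b -> w b b -> w b a, i.e. exactly the conditions imposed by the axioms of H.
   - Soundness of L: every theorem of L is true in every structure (D, E) in which
     E satisfies the defining equivalence of eps.
   - Models: if objects are considered up to an equivalence relation, names
     interpreted as sets of objects satisfy that equivalence; for an H-closed w a
     suitable choice of objects and denotations realises w.  Hence every
     quantifier-free theorem of L is true under every H-closed valuation.
   - Completeness of H: a quantifier-free formula true under every H-closed
     valuation follows tautologically from the finitely many axiom instances in
     its variables, hence is provable in H. *)

Lemma subst_notfree A x y : free x A = false -> subst x y A = A.
Proof.
  induction A as [a b | A IHA B IHB | A IHA | z A IHA]; simpl; intro Hx.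
  - apply orb_false_iff in Hx as [Ha Hb]. now rewrite Ha, Hb.
  - apply orb_false_iff in Hx as [HA HB]. now rewrite IHA, IHB.
  - now rewrite IHA.
  - destruct (z =? x); [reflexivity | now rewrite IHA].
Qed.

Section Semantics.
Variables (D : Type) (E : D -> D -> Prop).

Definition upd (r : nat -> D) (x : nat) (d : D) : nat -> D :=
  fun z => if z =? x then d else r z.

Fixpoint eval (r : nat -> D) (A : form) : Prop :=
  match A with
  | Eps a b => E (r a) (r b)
  | Or A B => eval r A \/ eval r B
  | Neg A => ~ eval r A
  | All z A => forall d, eval (upd r z d) A
  end.

Lemma eval_agree A r r' :
  (forall z, free z A = true -> r z = r' z) -> (eval r A <-> eval r' A).
Proof.
  revert r r'.
  induction A as [a b | A IHA B IHB | A IHA | x A IHA]; intros r r' Hrr'; simpl.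
  - rewrite (Hrr' a), (Hrr' b); [tauto | |]; simpl; rewrite Nat.eqb_refl; auto with bool.
  - rewrite (IHA r r'), (IHB r r'); [tauto | |];
      intros z Hz; apply Hrr'; simpl; rewrite Hz; auto with bool.
  - rewrite (IHA r r'); [tauto |]. exact Hrr'.
  - assert (Hd : forall d, eval (upd r x d) A <-> eval (upd r' x d) A).
    { intro d. apply IHA. intros z Hz. unfold upd.
      destruct (Nat.eqb_spec z x) as [_ | Hzx]; [reflexivity |].
      apply Hrr'. simpl. apply Nat.neq_sym, Nat.eqb_neq in Hzx. now rewrite Hzx, Hz. }
    split; intros H d; apply Hd, H.
Qed.

Lemma eval_ext A r r' : (forall z, r z = r' z) -> (eval r A <-> eval r' A).
Proof. intro Hrr'. apply eval_agree. intros z _. apply Hrr'. Qed.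

Lemma eval_upd_notfree A x d r : free x A = false -> (eval (upd r x d) A <-> eval r A).
Proof.
  intro Hx. apply eval_agree. intros z Hz. unfold upd.
  destruct (Nat.eqb_spec z x) as [-> | _]; [congruence | reflexivity].
Qed.

Lemma eval_subst A x y r :
  freefor y x A = true -> (eval r (subst x y A) <-> eval (upd r x (r y)) A).
Proof.
  revert r.
  induction A as [a b | A IHA B IHB | A IHA | z A IHA]; intros r Hff; simpl in Hff.
  - simpl. unfold upd. now destruct (a =? x), (b =? x).
  - apply andb_true_iff in Hff as [HA HB]. simpl. rewrite IHA, IHB by assumption. tauto.
  - simpl. rewrite IHA by assumption. tauto.
  - cbn [subst]. destruct (Nat.eqb_spec z x) as [-> | Hzx].
    + (* x is bound: nothing is substituted *)
      symmetry. apply eval_upd_notfree. simpl. now rewrite Nat.eqb_refl.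
    + apply andb_true_iff in Hff as [Hcapture Hff].
      apply orb_true_iff in Hcapture as [Hzy | Hxfree].
      * apply negb_true_iff, Nat.eqb_neq in Hzy.
        assert (Hd : forall d, eval (upd r z d) (subst x y A)
                               <-> eval (upd (upd r x (r y)) z d) A).
        { intro d. rewrite IHA by assumption. apply eval_ext. intro u. unfold upd.
          destruct (Nat.eqb_spec u z), (Nat.eqb_spec u x), (Nat.eqb_spec y z); congruence. }
        simpl. split; intros H d; apply Hd, H.
      * apply negb_true_iff in Hxfree. rewrite subst_notfree by assumption.
        symmetry. apply eval_upd_notfree. simpl. now rewrite Hxfree, andb_false_r.
Qed.

Lemma eval_imp r A B : eval r (Imp A B) <-> (eval r A -> eval r B).
Proof. unfold Imp; simpl. destruct (classic (eval r A)); tauto. Qed.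

Definition truth (P : Prop) : bool := if excluded_middle_informative P then true else false.

Lemma truth_spec (P : Prop) : truth P = true <-> P.
Proof. unfold truth. destruct excluded_middle_informative; split; congruence || tauto. Qed.

Lemma eval_pinst P s r :
  eval r (pinst s P) <-> peval (fun n => truth (eval r (s n))) P = true.
Proof.
  induction P as [n | P IHP Q IHQ | P IHP]; simpl.
  - symmetry. apply truth_spec.
  - rewrite IHP, IHQ, orb_true_iff. tauto.
  - rewrite IHP, negb_true_iff, not_true_iff_false. tauto.
Qed.

Lemma eval_taut_instance ok A r : taut_instance ok A -> eval r A.
Proof. intros (P & s & HP & _ & <-). apply eval_pinst, HP. Qed.

Hypothesis L_axiom_true : forall r, eval r L_axiom.

Theorem LProv_sound A : LProv A -> forall r, eval r A.
Proof.
  induction 1 as [ | A Htaut | x y A Hff | x A B Hx | A B _ IHAB _ IHA | x A _ IHA ];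
    intro r.
  - apply L_axiom_true.
  - exact (eval_taut_instance _ _ r Htaut).
  - apply eval_imp. intro Hall. apply eval_subst; [assumption | apply Hall].
  - apply eval_imp. intro Hall. apply eval_imp. intros HA d.
    apply (proj1 (eval_imp _ _ _) (Hall d)). apply eval_upd_notfree; assumption.
  - exact (proj1 (eval_imp _ _ _) (IHAB r) (IHA r)).
  - intro d. apply IHA.
Qed.
End Semantics.

Lemma eval_and D E r A B : eval D E r (And A B) <-> eval D E r A /\ eval D E r B.
Proof. simpl. tauto. Qed.
Lemma eval_eqv D E r A B : eval D E r (Eqv A B) <-> (eval D E r A <-> eval D E r B).
Proof. unfold Eqv. rewrite eval_and, !eval_imp. tauto. Qed.
Lemma eval_ex D E r x A : eval D E r (Ex x A) <-> exists d, eval D E (upd D r x d) A.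
Proof. simpl. split; [apply not_all_not_ex | intros [d Hd] H; exact (H d Hd)]. Qed.

Definition ontological (D : Type) (E : D -> D -> Prop) : Prop :=
  forall a b, E a b <->
    ((exists x, E x a /\ E x b) /\ (forall x y, E x a -> E y a -> E x y)).

Lemma L_axiom_true D E : ontological D E -> forall r, eval D E r L_axiom.
Proof.
  intros HE r a b. unfold L_axiom.
  rewrite eval_eqv, eval_and, eval_ex. cbn [eval].
  setoid_rewrite eval_imp. setoid_rewrite eval_and. unfold upd; simpl.
  rewrite (HE a b). firstorder.
Qed.

Section SetoidModel.
Variables (U : Type) (R : U -> U -> Prop).
Hypotheses (R_refl : forall u, R u u)
           (R_sym : forall u v, R u v -> R v u)
           (R_trans : forall u v t, R u v -> R v t -> R u t).

(* Names are interpreted as sets of objects, objects being considered up to R: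
   [a] applies to [b] iff [a] is nonempty with all its members R-equivalent
   ("a denotes exactly one object"), and some member of [a] is R-equivalent
   to a member of [b]. *)
Definition eps_setoid (a b : U -> Prop) : Prop :=
  (exists u v, a u /\ b v /\ R u v) /\ (forall u v, a u -> a v -> R u v).

Lemma eps_setoid_ontological : ontological (U -> Prop) eps_setoid.
Proof.
  intros a b. split.
  - intros [(u & v & Hu & Hv & Huv) Ha]. split.
    + (* a itself witnesses the existential *)
      exists a. split; split; eauto 6.
    + intros x y [(p & q & Hp & Hq & Hpq) Hx] [(p' & q' & Hp' & Hq' & Hpq') Hy].
      split; [exists p, p'; eauto 8 | exact Hx].
  - intros [(x & [(p & q & Hp & Hq & Hpq) Hx] & [(p' & q' & Hp' & Hq' & Hpq') _]) Hsing].
    split.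
    + exists q, q'. repeat split; eauto.
    + (* members of a give singleton names to which the uniqueness clause applies *)
      intros u v Hu Hv.
      assert (Huv : eps_setoid (eq u) (eq v)).
      { apply Hsing; split; try (intros ? ? <- <-; apply R_refl); eauto. }
      destruct Huv as [(? & ? & <- & <- & Huv) _]. exact Huv.
Qed.
End SetoidModel.

(* The three closure conditions that the axioms of H impose on a valuation of atoms. *)
Definition H_closed (w : nat -> nat -> bool) : Prop :=
  (forall a b, w a b = true -> w a a = true) /\
  (forall a b c, w a b = true -> w b c = true -> w a c = true) /\
  (forall a b, w a b = true -> w b b = true -> w b a = true).

Section ValuationModel.
Variable w : nat -> nat -> bool.
Hypothesis w_closed : H_closed w.

(* Objects are pairs (x, s); (x, s) and (y, t) are identified when the singular
   names x and y apply to each other. *)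
Definition same_object (u v : nat * bool) : Prop :=
  u = v \/ (w (fst u) (fst v) = true /\ w (fst v) (fst u) = true).

(* The name a denotes the objects of all names below it, together with the two
   objects (a, true), (a, false) when a is not singular, which makes it plural. *)
Definition denotation (a : nat) (u : nat * bool) : Prop :=
  w (fst u) a = true \/ (fst u = a /\ w a a = false).

Lemma same_object_equivalence :
  (forall u, same_object u u) /\
  (forall u v, same_object u v -> same_object v u) /\
  (forall u v t, same_object u v -> same_object v t -> same_object u t).
Proof.
  destruct w_closed as (_ & w_trans & _). unfold same_object.
  split; [| split]; [now left | intros u v [-> | []]; auto |].
  intros u v t [-> | [Huv Hvu]] [-> | [Hvt Htv]]; eauto 6.
Qed.

Lemma denotation_eps a b :
  eps_setoid _ same_object (denotation a) (denotation b) <-> w a b = true.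
Proof.
  destruct w_closed as (w_refl & w_trans & w_sym). unfold denotation, same_object.
  split.
  - intros [([x s] & [y t] & Hx & Hy & Hxy) Hsing]; simpl in *.
    assert (Haa : w a a = true).
    { destruct (w a a) eqn:Haa; [reflexivity | exfalso].
      assert (Hdummies : same_object (a, true) (a, false))
        by (apply Hsing; right; split; auto).
      destruct Hdummies as [Heq | [Hw _]]; [discriminate | simpl in Hw; congruence]. }
    destruct Hx as [Hxa | [_ Hfalse]]; [| congruence].
    assert (Hax : w a x = true) by eauto.
    destruct Hy as [Hyb | [-> Hbb]], Hxy as [Heq | [Hwxy Hwyx]].
    + injection Heq as -> _. eauto.
    + eauto.
    + injection Heq as -> _. rewrite (w_refl _ _ Hxa) in Hbb. discriminate.
    + rewrite (w_refl _ _ Hwyx) in Hbb. discriminate.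
  - intros Hab. assert (Haa : w a a = true) by eauto. split.
    + exists (a, true), (a, true). simpl. auto.
    + intros [x s] [y t] [Hxa | [-> Hfalse]] [Hya | [-> Hfalse']]; simpl in *;
        try congruence.
      right. split; eauto.
Qed.
End ValuationModel.

Fixpoint qeval (w : nat -> nat -> bool) (A : form) : bool :=
  match A with
  | Eps a b => w a b
  | Or A B => qeval w A || qeval w B
  | Neg A => negb (qeval w A)
  | All _ _ => false
  end.

Lemma eval_qf D E r w A :
  (forall a b, E (r a) (r b) <-> w a b = true) ->
  qf A = true -> (eval D E r A <-> qeval w A = true).
Proof.
  intro Hatoms. induction A as [a b | A IHA B IHB | A IHA | x A _]; simpl; intro Hqf.
  - apply Hatoms.
  - apply andb_true_iff in Hqf as [HA HB]. rewrite IHA, IHB, orb_true_iff by assumption. tauto.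
  - rewrite IHA, negb_true_iff, not_true_iff_false by assumption. tauto.
  - discriminate.
Qed.

Fixpoint vars (A : form) : list nat :=
  match A with
  | Eps a b => [a; b]
  | Or A B => vars A ++ vars B
  | Neg A => vars A
  | All _ _ => []
  end.

Lemma qeval_agree V w w' A :
  (forall a b, In a V -> In b V -> w a b = w' a b) ->
  incl (vars A) V -> qeval w A = qeval w' A.
Proof.
  intro Hww'. induction A as [a b | A IHA B IHB | A IHA | x A _]; simpl; intro Hincl.
  - apply Hww'; apply Hincl; simpl; auto.
  - apply incl_app_inv in Hincl as [HA HB]. now rewrite IHA, IHB.
  - now rewrite IHA.
  - reflexivity.
Qed.

(* The propositional skeleton of a quantifier-free formula: the atom eps a b
   becomes the variable with Cantor code (a, b). *)
Fixpoint skeleton (A : form) : pform :=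
  match A with
  | Eps a b => PVar (to_nat (a, b))
  | Or A B => POr (skeleton A) (skeleton B)
  | Neg A => PNeg (skeleton A)
  | All _ _ => PVar 0
  end.

Definition atom_of_code (n : nat) : form := let (a, b) := of_nat n in Eps a b.

Lemma pinst_skeleton A : qf A = true -> pinst atom_of_code (skeleton A) = A.
Proof.
  induction A as [a b | A IHA B IHB | A IHA | x A _]; simpl; intro Hqf.
  - change (atom_of_code (to_nat (a, b)) = Eps a b).
    unfold atom_of_code. now rewrite cancel_of_to.
  - apply andb_true_iff in Hqf as [HA HB]. now rewrite IHA, IHB.
  - now rewrite IHA.
  - discriminate.
Qed.

Lemma peval_skeleton v A :
  qf A = true -> peval v (skeleton A) = qeval (fun a b => v (to_nat (a, b))) A.
Proof.
  induction A as [a b | A IHA B IHB | A IHA | x A _]; simpl; intro Hqf.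
  - reflexivity.
  - apply andb_true_iff in Hqf as [HA HB]. now rewrite IHA, IHB.
  - now rewrite IHA.
  - discriminate.
Qed.

Lemma H_valid A : qf A = true -> (forall w, qeval w A = true) -> HProv A.
Proof.
  intros Hqf Hvalid. apply H_taut. exists (skeleton A), atom_of_code.
  split; [| split].
  - intro v. rewrite peval_skeleton by assumption. apply Hvalid.
  - intro n. unfold atom_of_code. now destruct (of_nat n).
  - now apply pinst_skeleton.
Qed.

Lemma qeval_imp w A B : qeval w (Imp A B) = true <-> (qeval w A = true -> qeval w B = true).
Proof. simpl. rewrite orb_true_iff, negb_true_iff. destruct (qeval w A); intuition congruence. Qed.

Lemma qeval_and w A B : qeval w (And A B) = true <-> qeval w A = true /\ qeval w B = true.
Proof. simpl. rewrite negb_true_iff, orb_false_iff, !negb_false_iff. reflexivity. Qed.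

Lemma H_consequence (hyps : list form) A :
  (forall B, In B hyps -> qf B = true /\ HProv B) -> qf A = true ->
  (forall w, (forall B, In B hyps -> qeval w B = true) -> qeval w A = true) -> HProv A.
Proof.
  revert A. induction hyps as [| B hyps IH]; intros A Hhyps Hqf Hcons.
  - apply H_valid; [assumption |]. intro w. apply Hcons. intros B [].
  - destruct (Hhyps B (or_introl eq_refl)) as [HqfB HB].
    apply (H_mp B); [| exact HB].
    apply IH.
    + intros C HC. apply Hhyps. now right.
    + simpl. now rewrite HqfB, Hqf.
    + intros w Hwhyps. apply qeval_imp. intro HwB.
      apply Hcons. intros C [<- | HC]; auto.
Qed.

Definition ax1 (a b : nat) : form := Imp (Eps a b) (Eps a a).
Definition ax2 (a b c : nat) : form := Imp (And (Eps a b) (Eps b c)) (Eps a c).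
Definition ax3 (a b : nat) : form := Imp (And (Eps a b) (Eps b b)) (Eps b a).

Definition axiom_instances (V : list nat) : list form :=
  flat_map (fun a => flat_map (fun b =>
    ax1 a b :: ax3 a b :: map (ax2 a b) V) V) V.

Lemma axiom_instances_H V B : In B (axiom_instances V) -> qf B = true /\ HProv B.
Proof.
  unfold axiom_instances. intro HB.
  apply in_flat_map in HB as (a & _ & HB). apply in_flat_map in HB as (b & _ & HB).
  destruct HB as [<- | [<- | HB]].
  - split; [reflexivity | apply H_ax1].
  - split; [reflexivity | apply H_ax3].
  - apply in_map_iff in HB as (c & <- & _). split; [reflexivity | apply H_ax2].
Qed.

Lemma axiom_instances_complete V a b c : In a V -> In b V -> In c V ->
  In (ax1 a b) (axiom_instances V) /\ In (ax2 a b c) (axiom_instances V) /\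
  In (ax3 a b) (axiom_instances V).
Proof.
  intros Ha Hb Hc. unfold axiom_instances.
  repeat split; apply in_flat_map; exists a; split; auto;
    apply in_flat_map; exists b; split; simpl; auto.
  right; right. now apply in_map.
Qed.

Definition restrict (V : list nat) (w : nat -> nat -> bool) (a b : nat) : bool :=
  if in_dec Nat.eq_dec a V then if in_dec Nat.eq_dec b V then w a b else false else false.

Lemma restrict_true V w a b :
  restrict V w a b = true -> In a V /\ In b V /\ w a b = true.
Proof.
  unfold restrict. destruct (in_dec Nat.eq_dec a V), (in_dec Nat.eq_dec b V); auto; discriminate.
Qed.

Lemma restrict_in V w a b : In a V -> In b V -> restrict V w a b = w a b.
Proof. unfold restrict. destruct (in_dec Nat.eq_dec a V), (in_dec Nat.eq_dec b V); tauto. Qed.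

Lemma restrict_H_closed V w :
  (forall B, In B (axiom_instances V) -> qeval w B = true) -> H_closed (restrict V w).
Proof.
  intro Hinst. split; [| split].
  - intros a b Hab. apply restrict_true in Hab as (Ha & Hb & Hab).
    rewrite restrict_in by assumption.
    destruct (axiom_instances_complete V a b b Ha Hb Hb) as (H1 & _).
    exact (proj1 (qeval_imp _ _ _) (Hinst _ H1) Hab).
  - intros a b c Hab Hbc.
    apply restrict_true in Hab as (Ha & Hb & Hab), Hbc as (_ & Hc & Hbc).
    rewrite restrict_in by assumption.
    destruct (axiom_instances_complete V a b c Ha Hb Hc) as (_ & H2 & _).
    apply (proj1 (qeval_imp _ _ _) (Hinst _ H2)), qeval_and. auto.
  - intros a b Hab Hbb.
    apply restrict_true in Hab as (Ha & Hb & Hab), Hbb as (_ & _ & Hbb).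
    rewrite restrict_in by assumption.
    destruct (axiom_instances_complete V a b b Ha Hb Hb) as (_ & _ & H3).
    apply (proj1 (qeval_imp _ _ _) (Hinst _ H3)), qeval_and. auto.
Qed.

Theorem H_complete A : qf A = true -> (forall w, H_closed w -> qeval w A = true) -> HProv A.
Proof.
  intros Hqf Hvalid. apply (H_consequence (axiom_instances (vars A))).
  - apply axiom_instances_H.
  - exact Hqf.
  - intros w Hinst.
    rewrite (qeval_agree (vars A) w (restrict (vars A) w)).
    + now apply Hvalid, restrict_H_closed.
    + intros a b Ha Hb. symmetry. now apply restrict_in.
    + apply incl_refl.
Qed.

(* Every quantifier-free theorem of L is true under every H-closed valuation,
   since it is true in the model realising that valuation. *)
Lemma LProv_qeval w A : H_closed w -> qf A = true -> LProv A -> qeval w A = true.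
Proof.
  intros Hw Hqf HL.
  apply (eval_qf _ (eps_setoid _ (same_object w)) (denotation w) w A); [| exact Hqf |].
  - intros a b. exact (denotation_eps w Hw a b).
  - apply LProv_sound; [| exact HL].
    destruct (same_object_equivalence w Hw) as (Hrefl & Hsym & Htrans).
    apply L_axiom_true, eps_setoid_ontological; assumption.
Qed.

Theorem theorem6p5 : forall A : form, qf A = true -> LProv A -> HProv A.
Proof.
  intros A Hqf HL. apply H_complete; [exact Hqf |].
  intros w Hw. exact (LProv_qeval w A Hw Hqf HL).
Qed.
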